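(* Consider problem (VP) under the standing assumptions at $\bar x\in Q_0$. Let $\bar x$ be a local weak efficient solution of (VP) (in particular, a local efficient solution), and suppose that $L^2(Q;\bar x,u)\subset T^2(Q_0;\bar x,u)$ for every critical direction $u\in\mathcal{C}(\bar x)$. Then there is no pair $(u,v)\in X\times X$ such that $F_i^2(\bar x;u,v)<_{\rm lex}(0,0)$ for all $i\in I$ and $G_j^2(\bar x;u,v)\leqq_{\rm lex}(0,0)$ for all $j\in J(\bar x)$.
   Context: Standing setting: $X$ is a Banach space; $I=\{1,\dots,p\}$, $J=\{1,\dots,m\}$; $f_i,g_j\colon X\to\mathbb{R}$; (VP) minimizes $f=(f_1,\dots,f_p)$ over $Q_0:=\{x\in X: g_j(x)\leqq 0,\ j\in J\}$. $J(\bar x):=\{j\in J: g_j(\bar x)=0\}$. Standing assumptions: $f_i$ ($i\in I$), $g_j$ ($j\in J(\bar x)$) locally Lipschitz at $\bar x$; $g_j$ ($j\notin J(\bar x)$) continuous at $\bar x$. $F^{\circ}(\bar x,u):=\limsup_{x\to\bar x,\,t\downarrow0}\frac{F(x+tu)-F(x)}{t}$; $F^{\circ\circ}(\bar x,u):=\limsup_{t\downarrow0}\frac{F(\bar x+tu)-F(\bar x)-tF^{\circ}(\bar x,u)}{\frac12t^2}$. Lexicographic order on $\mathbb{R}^2$: $a\leqq_{\rm lex}b$ iff $a_1<b_1$ or ($a_1=b_1$, $a_2\leqq b_2$); $a<_{\rm lex}b$ iff $a_1<b_1$ or ($a_1=b_1$, $a_2<b_2$). $F_i^2(\bar x;u,v):=(f_i^{\circ}(\bar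 x,u),\, f_i^{\circ}(\bar x,v)+f_i^{\circ\circ}(\bar x,u))$, $G_j^2(\bar x;u,v):=(g_j^{\circ}(\bar x,u),\, g_j^{\circ}(\bar x,v)+g_j^{\circ\circ}(\bar x,u))$. $Q:=Q_0\cap\{x: f_i(x)\leqq f_i(\bar x),\ i\in I\}$; $L^2(Q;\bar x,u):=\{v: F_i^2(\bar x;u,v)\leqq_{\rm lex}(0,0)\ \forall i\in I,\ G_j^2(\bar x;u,v)\leqq_{\rm lex}(0,0)\ \forall j\in J(\bar x)\}$. $T^2(\Omega;\bar x,u):=\{v: \exists t_k\downarrow0,\ \exists v^k\to v,\ \bar x+t_ku+\frac12t_k^2v^k\in\Omega\ \forall k\}$. Critical direction: $u\in X$ with $f_i^{\circ}(\bar x,u)\leqq0$ for all $i$, $f_i^{\circ}(\bar x,u)=0$ for some $i$, and $g_j^{\circ}(\bar x,u)\leqq0$ for all $j\in J(\bar x)$; $\mathcal{C}(\bar x)$ is the set of these (note $0\in\mathcal{C}(\bar x)$). Local weak efficient solution: there is a neighborhood $U$ of $\bar x$ such that no $x\in U\cap Q_0$ has $f_i(x)<f_i(\bar x)$ for all $i\in I$; local efficient: no $x\in U\cap Q_0$ has $f(x)\leqq f(\bar x)$ componentwise with $f(x)\ne f(\bar x)$. *)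

From Stdlib Require Import Reals Lra ClassicalEpsilon.
Open Scope R_scope.

Record BanachSpace := {
  bs_car :> Type;
  bs_zero : bs_car;
  bs_add : bs_car -> bs_car -> bs_car;
  bs_opp : bs_car -> bs_car;
  bs_scal : R -> bs_car -> bs_car;
  bs_norm : bs_car -> R;
  bs_add_assoc : forall x y z, bs_add x (bs_add y z) = bs_add (bs_add x y) z;
  bs_add_comm : forall x y, bs_add x y = bs_add y x;
  bs_add_zero : forall x, bs_add x bs_zero = x;
  bs_add_opp : forall x, bs_add x (bs_opp x) = bs_zero;
  bs_scal_one : forall x, bs_scal 1 x = x;
  bs_scal_assoc : forall a b x, bs_scal a (bs_scal b x) = bs_scal (a * b) x;
  bs_scal_distr_l : forall a x y, bs_scal a (bs_add x y) = bs_add (bs_scal a x) (bs_scal a y);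
  bs_scal_distr_r : forall a b x, bs_scal (a + b) x = bs_add (bs_scal a x) (bs_scal b x);
  bs_norm_nonneg : forall x, 0 <= bs_norm x;
  bs_norm_eq0 : forall x, bs_norm x = 0 -> x = bs_zero;
  bs_norm_scal : forall a x, bs_norm (bs_scal a x) = Rabs a * bs_norm x;
  bs_norm_triangle : forall x y, bs_norm (bs_add x y) <= bs_norm x + bs_norm y;
  bs_complete : forall u : nat -> bs_car,
    (forall eps, 0 < eps -> exists N, forall n k, (n >= N)%nat -> (k >= N)%nat ->
        bs_norm (bs_add (u n) (bs_opp (u k))) < eps) ->
    exists l, forall eps, 0 < eps -> exists N, forall n, (n >= N)%nat ->
        bs_norm (bs_add (u n) (bs_opp l)) < eps
}.

Arguments bs_add {b0}.
Arguments bs_opp {b0}.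
Arguments bs_scal {b0}.
Arguments bs_norm {b0}.

Definition bs_sub {X : BanachSpace} (x y : X) : X := bs_add x (bs_opp y).

Inductive Rbar := Finite (r : R) | p_infty | m_infty.

Definition Rbar_lt (a b : Rbar) : Prop :=
  match a, b with
  | Finite x, Finite y => x < y
  | m_infty, m_infty => False
  | m_infty, _ => True
  | Finite _, p_infty => True
  | _, _ => False
  end.

Definition Rbar_le (a b : Rbar) : Prop := Rbar_lt a b \/ a = b.

(* addition; the convention for (+oo) + (-oo) is irrelevant here since the
   first summand (a Clarke derivative of a locally Lipschitz function) is finite *)
Definition Rbar_plus (a b : Rbar) : Rbar :=
  match a, b with
  | Finite x, Finite y => Finite (x + y)
  | Finite _, c => c
  | c, Finite _ => c
  | p_infty, p_infty => p_infty
  | m_infty, m_infty => m_infty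
  | _, _ => Finite 0
  end.

Definition Rbar_real (a : Rbar) : R :=
  match a with Finite x => x | _ => 0 end.

Definition is_limsup {D : Type} (B : R -> D -> Prop) (q : D -> R) (L : Rbar) : Prop :=
  match L with
  | Finite l =>
      (forall eps, 0 < eps -> exists d, 0 < d /\ forall z, B d z -> q z < l + eps) /\
      (forall eps d, 0 < eps -> 0 < d -> exists z, B d z /\ l - eps < q z)
  | p_infty => forall M d, 0 < d -> exists z, B d z /\ M < q z
  | m_infty => forall M, exists d, 0 < d /\ forall z, B d z -> q z < M
  end.

Definition limsup {D : Type} (B : R -> D -> Prop) (q : D -> R) : Rbar :=
  epsilon (inhabits m_infty) (is_limsup B q).

(* Clarke generalized directional derivative F°(xbar,u):
   limsup_{x -> xbar, t ↓ 0} (F(x + t u) - F(x)) / t *)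
Definition clarke {X : BanachSpace} (F : X -> R) (xbar u : X) : Rbar :=
  limsup (fun d (z : X * R) => bs_norm (bs_sub (fst z) xbar) < d /\ 0 < snd z < d)
         (fun z => (F (bs_add (fst z) (bs_scal (snd z) u)) - F (fst z)) / snd z).

(* F°°(xbar,u) := limsup_{t ↓ 0} (F(xbar + t u) - F(xbar) - t F°(xbar,u)) / (t^2/2) *)
Definition clarke2 {X : BanachSpace} (F : X -> R) (xbar u : X) : Rbar :=
  limsup (fun d (t : R) => 0 < t < d)
         (fun t => (F (bs_add xbar (bs_scal t u)) - F xbar - t * Rbar_real (clarke F xbar u))
                   / (t ^ 2 / 2)).

Definition second_pair {X : BanachSpace} (F : X -> R) (xbar u v : X) : Rbar * Rbar :=
  (clarke F xbar u, Rbar_plus (clarke F xbar v) (clarke2 F xbar u)).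

Definition lex_le (a b : Rbar * Rbar) : Prop :=
  Rbar_lt (fst a) (fst b) \/ (fst a = fst b /\ Rbar_le (snd a) (snd b)).
Definition lex_lt (a b : Rbar * Rbar) : Prop :=
  Rbar_lt (fst a) (fst b) \/ (fst a = fst b /\ Rbar_lt (snd a) (snd b)).

Definition zero2 : Rbar * Rbar := (Finite 0, Finite 0).

(* ---------- the problem (VP); indices 0-based: I = {i | i < p}, J = {j | j < m} ---------- *)
Definition locally_lipschitz_at {X : BanachSpace} (F : X -> R) (xbar : X) : Prop :=
  exists K d, 0 < d /\ forall x y : X,
    bs_norm (bs_sub x xbar) < d -> bs_norm (bs_sub y xbar) < d ->
    Rabs (F x - F y) <= K * bs_norm (bs_sub x y).

Definition continuous_at_bs {X : BanachSpace} (F : X -> R) (xbar : X) : Prop :=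
  forall eps, 0 < eps -> exists d, 0 < d /\ forall x : X,
    bs_norm (bs_sub x xbar) < d -> Rabs (F x - F xbar) < eps.

Definition Q0 {X : BanachSpace} (m : nat) (g : nat -> X -> R) (x : X) : Prop :=
  forall j, (j < m)%nat -> g j x <= 0.

Definition active {X : BanachSpace} (g : nat -> X -> R) (xbar : X) (j : nat) : Prop :=
  g j xbar = 0.

Definition Qset {X : BanachSpace} (p m : nat) (f g : nat -> X -> R) (xbar x : X) : Prop :=
  Q0 m g x /\ forall i, (i < p)%nat -> f i x <= f i xbar.

Definition local_weak_efficient {X : BanachSpace} (p m : nat) (f g : nat -> X -> R)
  (xbar : X) : Prop :=
  exists d, 0 < d /\ forall x : X, bs_norm (bs_sub x xbar) < d -> Q0 m g x ->
    ~ (forall i, (i < p)%nat -> f i x < f i xbar).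

Definition L2 {X : BanachSpace} (p m : nat) (f g : nat -> X -> R) (xbar u v : X) : Prop :=
  (forall i, (i < p)%nat -> lex_le (second_pair (f i) xbar u v) zero2) /\
  (forall j, (j < m)%nat -> active g xbar j -> lex_le (second_pair (g j) xbar u v) zero2).

Definition T2 {X : BanachSpace} (Omega : X -> Prop) (xbar u v : X) : Prop :=
  exists (t : nat -> R) (vk : nat -> X),
    (forall k, 0 < t k) /\ Un_cv t 0 /\
    (forall eps, 0 < eps -> exists N, forall k, (k >= N)%nat -> bs_norm (bs_sub (vk k) v) < eps) /\
    (forall k, Omega (bs_add (bs_add xbar (bs_scal (t k) u)) (bs_scal (/ 2 * t k ^ 2) (vk k)))).

Definition critical_dir {X : BanachSpace} (p m : nat) (f g : nat -> X -> R) (xbar u : X) : Prop :=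
  (forall i, (i < p)%nat -> Rbar_le (clarke (f i) xbar u) (Finite 0)) /\
  (exists i, (i < p)%nat /\ clarke (f i) xbar u = Finite 0) /\
  (forall j, (j < m)%nat -> active g xbar j -> Rbar_le (clarke (g j) xbar u) (Finite 0)).

(** Along a critical direction the paper's constraint qualification turns a pair [(u, v)]
    with [F_i^2 (xbar; u, v) <_lex (0, 0)] into feasible points
    [x_k = xbar + t_k u + t_k^2/2 v_k] with [t_k -> 0+] and [v_k -> v].  Each [f_i] decreases
    strictly along [x_k]: if [f_i°(xbar, u) < 0] this is a first-order estimate, and if
    [f_i°(xbar, u) = 0] the second component [f_i°(xbar, v) + f_i°°(xbar, u) < 0] controls the
    term of order [t_k^2]; in both cases the Lipschitz constant absorbs the error [v_k - v].
    This contradicts weak efficiency.  If [u] itself is not critical, all [f_i°(xbar, u) < 0]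
    and the pair [(0, u)] satisfies the same hypotheses with the critical direction [0]. *)

From Stdlib Require Import Reals Lra Lia Classical ClassicalEpsilon.
Open Scope R_scope.

Section VectorAlgebra.
Context {X : BanachSpace}.

Lemma bs_add0l (x : X) : bs_add (bs_zero X) x = x.
Proof. rewrite bs_add_comm. apply bs_add_zero. Qed.

Lemma bs_addKl (a x y : X) : bs_add a x = bs_add a y -> x = y.
Proof.
  intros H. apply (f_equal (bs_add (bs_opp a))) in H.
  rewrite !bs_add_assoc, (bs_add_comm _ (bs_opp a) a), bs_add_opp, !bs_add0l in H.
  exact H.
Qed.

Lemma bs_opp_unique (x y : X) : bs_add x y = bs_zero X -> y = bs_opp x.
Proof. intros H. apply (bs_addKl x). rewrite H, bs_add_opp. reflexivity. Qed.

Lemma bs_scal0r (a : R) : bs_scal a (bs_zero X) = bs_zero X.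
Proof.
  apply (bs_addKl (bs_scal a (bs_zero X))).
  rewrite <- bs_scal_distr_l, !bs_add_zero. reflexivity.
Qed.

Lemma bs_norm0 : bs_norm (bs_zero X) = 0.
Proof. rewrite <- (bs_scal0r 0), bs_norm_scal, Rabs_R0. ring. Qed.

Lemma bs_oppD (x y : X) : bs_opp (bs_add x y) = bs_add (bs_opp x) (bs_opp y).
Proof.
  symmetry. apply bs_opp_unique.
  rewrite bs_add_assoc, (bs_add_comm _ x y), <- (bs_add_assoc _ y x), bs_add_opp,
    bs_add_zero, bs_add_opp.
  reflexivity.
Qed.

Lemma bs_scalN (a : R) (x : X) : bs_scal a (bs_opp x) = bs_opp (bs_scal a x).
Proof.
  apply bs_opp_unique. rewrite <- bs_scal_distr_l, bs_add_opp. apply bs_scal0r.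
Qed.

Lemma bs_subv (x : X) : bs_sub x x = bs_zero X.
Proof. apply bs_add_opp. Qed.

Lemma bs_subDl (y a b : X) : bs_sub (bs_add y a) (bs_add y b) = bs_sub a b.
Proof.
  unfold bs_sub. rewrite bs_oppD, (bs_add_comm _ y a), <- (bs_add_assoc _ a y),
    (bs_add_assoc _ y (bs_opp y)), bs_add_opp, bs_add0l.
  reflexivity.
Qed.

Lemma bs_subDr (a b c : X) : bs_sub (bs_add a b) c = bs_add (bs_sub a c) b.
Proof.
  unfold bs_sub. rewrite <- !bs_add_assoc, (bs_add_comm _ b (bs_opp c)). reflexivity.
Qed.

Lemma bs_scal_sub (s : R) (a b : X) :
  bs_sub (bs_scal s a) (bs_scal s b) = bs_scal s (bs_sub a b).
Proof. unfold bs_sub. rewrite bs_scal_distr_l, bs_scalN. reflexivity. Qed.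

Lemma bs_norm_scal_pos (t : R) (a : X) : 0 < t -> bs_norm (bs_scal t a) = t * bs_norm a.
Proof. intros. rewrite bs_norm_scal, Rabs_pos_eq by lra. reflexivity. Qed.

Lemma bs_norm_le_sub (w v : X) : bs_norm w <= bs_norm (bs_sub w v) + bs_norm v.
Proof.
  assert (E : w = bs_add (bs_sub w v) v).
  { unfold bs_sub. rewrite <- bs_add_assoc, (bs_add_comm _ (bs_opp v) v), bs_add_opp,
      bs_add_zero.
    reflexivity. }
  rewrite E at 1. apply bs_norm_triangle.
Qed.

End VectorAlgebra.

Lemma Rlt_div_mult (a b c : R) : 0 < c -> a < b / c -> a * c < b.
Proof.
  intros Hc H. apply (Rmult_lt_compat_r c) in H; [|exact Hc].
  unfold Rdiv in H. rewrite Rmult_assoc, Rinv_l, Rmult_1_r in H; lra.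
Qed.

Lemma Rdiv_lt_mult (a b c : R) : 0 < c -> a / c < b -> a < b * c.
Proof.
  intros Hc H. apply (Rmult_lt_compat_r c) in H; [|exact Hc].
  unfold Rdiv in H. rewrite Rmult_assoc, Rinv_l, Rmult_1_r in H; lra.
Qed.

Section Sequences.

Definition eventually (P : nat -> Prop) : Prop := exists N, forall k, (k >= N)%nat -> P k.

Lemma eventually_mono (P Q : nat -> Prop) :
  (forall k, P k -> Q k) -> eventually P -> eventually Q.
Proof. intros HPQ [N HN]. exists N. auto. Qed.

Lemma eventually_and (P Q : nat -> Prop) :
  eventually P -> eventually Q -> eventually (fun k => P k /\ Q k).
Proof.
  intros [N1 H1] [N2 H2]. exists (N1 + N2)%nat. intros k Hk. split; [apply H1 | apply H2]; lia.
Qed.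

Lemma eventually_forall_lt (p : nat) (P : nat -> nat -> Prop) :
  (forall i, (i < p)%nat -> eventually (P i)) ->
  eventually (fun k => forall i, (i < p)%nat -> P i k).
Proof.
  induction p as [|p IH]; intros H.
  - exists 0%nat. intros. lia.
  - destruct (IH (fun i Hi => H i ltac:(lia))) as [N1 H1].
    destruct (H p ltac:(lia)) as [N2 H2].
    exists (N1 + N2)%nat. intros k Hk i Hi.
    destruct (Nat.eq_dec i p) as [->|Hne]; [apply H2 | apply H1]; lia.
Qed.

Definition tends_to_0plus (s : nat -> R) : Prop :=
  (forall k, 0 < s k) /\ forall eps, 0 < eps -> eventually (fun k => s k < eps).

Lemma tends_to_0plus_of_Un_cv (t : nat -> R) :
  (forall k, 0 < t k) -> Un_cv t 0 -> tends_to_0plus t.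
Proof.
  intros Hpos Hcv. split; [exact Hpos|]. intros eps Heps.
  destruct (Hcv eps Heps) as [N HN]. exists N. intros k Hk.
  specialize (HN k Hk). unfold R_dist in HN. pose proof (Rle_abs (t k - 0)). lra.
Qed.

Lemma tends_to_0plus_mul_lt (s : nat -> R) (c eps : R) :
  tends_to_0plus s -> 0 < c -> 0 < eps -> eventually (fun k => s k * c < eps).
Proof.
  intros [_ Hs] Hc Heps. apply (eventually_mono (fun k => s k < eps / c)).
  - intros k. apply Rlt_div_mult, Hc.
  - apply Hs, Rdiv_lt_0_compat; assumption.
Qed.

Lemma tends_to_0plus_scal (c : R) (s : nat -> R) :
  0 < c -> tends_to_0plus s -> tends_to_0plus (fun k => c * s k).
Proof.
  intros Hc Hs. split.
  - intros k. pose proof (proj1 Hs k). nra.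
  - intros eps Heps. apply (eventually_mono (fun k => s k * c < eps)).
    + intros k Hk. rewrite Rmult_comm. exact Hk.
    + apply tends_to_0plus_mul_lt; assumption.
Qed.

Lemma tends_to_0plus_half_sqr (t : nat -> R) :
  tends_to_0plus t -> tends_to_0plus (fun k => / 2 * t k ^ 2).
Proof.
  intros [Hpos Ht]. split.
  - intros k. specialize (Hpos k). nra.
  - intros eps Heps. pose proof (eventually_and _ _ (Ht 1 Rlt_0_1) (Ht eps Heps)) as H.
    revert H. apply eventually_mono. intros k [H1 H2]. specialize (Hpos k). nra.
Qed.

Context {X : BanachSpace}.

Definition bs_cv (x : nat -> X) (l : X) : Prop :=
  forall eps, 0 < eps -> eventually (fun k => bs_norm (bs_sub (x k) l) < eps).

Lemma bs_cv_const (x : X) : bs_cv (fun _ => x) x.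
Proof. intros eps Heps. exists 0%nat. intros k _. rewrite bs_subv, bs_norm0. exact Heps. Qed.

Lemma bs_cv_bounded (w : nat -> X) (w0 : X) :
  bs_cv w w0 -> eventually (fun k => bs_norm (w k) <= bs_norm w0 + 1).
Proof.
  intros Hw. generalize (Hw 1 Rlt_0_1). apply eventually_mono. intros k Hk.
  pose proof (bs_norm_le_sub (w k) w0). lra.
Qed.

Lemma bs_cv_add_scal (y w : nat -> X) (l w0 : X) (s : nat -> R) :
  bs_cv y l -> tends_to_0plus s -> bs_cv w w0 ->
  bs_cv (fun k => bs_add (y k) (bs_scal (s k) (w k))) l.
Proof.
  intros Hy Hs Hw eps Heps.
  set (M := bs_norm w0 + 1).
  assert (HM : 0 < M) by (pose proof (bs_norm_nonneg _ w0); unfold M; lra).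
  pose proof (eventually_and _ _ (Hy (eps / 2) ltac:(lra))
    (eventually_and _ _ (tends_to_0plus_mul_lt s M (eps / 2) Hs HM ltac:(lra))
                        (bs_cv_bounded w w0 Hw))) as H.
  revert H. apply eventually_mono. intros k (Hyk & Hsk & Hwk).
  pose proof (proj1 Hs k) as Hpos.
  rewrite bs_subDr.
  eapply Rle_lt_trans; [apply bs_norm_triangle|].
  rewrite bs_norm_scal_pos by exact Hpos. fold M in Hwk.
  assert (s k * bs_norm (w k) <= s k * M) by (apply Rmult_le_compat_l; lra).
  lra.
Qed.

End Sequences.

Section Limsup.
Context {D : Type} (B : R -> D -> Prop) (q : D -> R).

Definition eventual_upper (r : R) : Prop := exists d, 0 < d /\ forall z, B d z -> q z < r.

Lemma eventual_upper_mono (r r' : R) : r <= r' -> eventual_upper r -> eventual_upper r'.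
Proof.
  intros Hr [d [Hd Hz]]. exists d. split; [exact Hd|]. intros z Hbz. specialize (Hz z Hbz). lra.
Qed.

Lemma is_limsup_p_infty_intro :
  (forall r, ~ eventual_upper r) -> is_limsup B q p_infty.
Proof.
  intros Hno M d Hd. apply NNPP. intros Hnz. apply (Hno (M + 1)). exists d. split; [exact Hd|].
  intros z Hbz. apply Rnot_le_lt. intros Hle. apply Hnz. exists z. split; [exact Hbz | lra].
Qed.

Lemma is_limsup_Finite_intro (l : R) :
  (forall eps, 0 < eps -> eventual_upper (l + eps)) ->
  (forall r, eventual_upper r -> l <= r) ->
  is_limsup B q (Finite l).
Proof.
  intros Hup Hlow. split.
  - exact Hup.
  - intros eps d Heps Hd. apply NNPP. intros Hnz.
    assert (Hd' : eventual_upper (l - eps / 2)).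
    { exists d. split; [exact Hd|]. intros z Hbz. apply Rnot_le_lt. intros Hle.
      apply Hnz. exists z. split; [exact Hbz | lra]. }
    specialize (Hlow _ Hd'). lra.
Qed.

(** The finite limsup is the infimum of the eventual upper bounds, obtained from [completeness]
    applied to their negatives. *)
Lemma limsup_exists : exists L, is_limsup B q L.
Proof.
  destruct (classic (forall r, ~ eventual_upper r)) as [Hno|Hsome].
  { exists p_infty. apply is_limsup_p_infty_intro, Hno. }
  apply not_all_not_ex in Hsome as [r0 Hr0].
  destruct (classic (forall r, eventual_upper r)) as [Hall|Hnall].
  { exists m_infty. exact Hall. }
  apply not_all_ex_not in Hnall as [r1 Hr1].
  set (E := fun x => eventual_upper (- x)).
  assert (HE_bound : bound E).
  { exists (- r1). intros x Hx. apply Rnot_lt_le. intros Hlt. apply Hr1.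
    apply (eventual_upper_mono (- x)); [lra | exact Hx]. }
  assert (HE_inhabited : exists x, E x).
  { exists (- r0). unfold E. rewrite Ropp_involutive. exact Hr0. }
  destruct (completeness E HE_bound HE_inhabited) as [mm [Hub Hlub]].
  exists (Finite (- mm)). apply is_limsup_Finite_intro.
  - intros eps Heps. apply NNPP. intros Hnot.
    assert (Hub' : is_upper_bound E (mm - eps)).
    { intros x Hx. apply Rnot_lt_le. intros Hlt. apply Hnot.
      apply (eventual_upper_mono (- x)); [lra | exact Hx]. }
    specialize (Hlub _ Hub'). lra.
  - intros r Hr. assert (E (- r)) as Hr' by (unfold E; rewrite Ropp_involutive; exact Hr).
    specialize (Hub _ Hr'). lra.
Qed.

Lemma limsup_spec : is_limsup B q (limsup B q).
Proof. unfold limsup. apply epsilon_spec, limsup_exists. Qed.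

Lemma limsup_lt_eventual_upper (r : R) :
  Rbar_lt (limsup B q) (Finite r) -> eventual_upper r.
Proof.
  pose proof limsup_spec as Hspec. destruct (limsup B q) as [l| |]; simpl; intros Hlt.
  - destruct Hspec as [Hup _]. apply (eventual_upper_mono (l + (r - l))); [lra|].
    apply Hup. lra.
  - contradiction.
  - apply Hspec.
Qed.

Lemma limsup_const (c : R) :
  (forall d z, B d z -> q z = c) -> (forall d, 0 < d -> exists z, B d z) ->
  limsup B q = Finite c.
Proof.
  intros Hq Hne. pose proof limsup_spec as Hspec.
  destruct (limsup B q) as [l| |]; simpl in Hspec.
  - destruct Hspec as [Hup Hlow]. f_equal. apply Rle_antisym.
    + apply Rnot_lt_le. intros Hlt.
      destruct (Hlow (l - c) 1 ltac:(lra) Rlt_0_1) as [z [Hbz Hz]].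
      rewrite (Hq _ _ Hbz) in Hz. lra.
    + apply Rnot_lt_le. intros Hlt.
      destruct (Hup (c - l) ltac:(lra)) as [d [Hd Hz]]. destruct (Hne d Hd) as [z Hbz].
      specialize (Hz z Hbz). rewrite (Hq _ _ Hbz) in Hz. lra.
  - destruct (Hspec c 1 Rlt_0_1) as [z [Hbz Hz]]. rewrite (Hq _ _ Hbz) in Hz. lra.
  - destruct (Hspec c) as [d [Hd Hz]]. destruct (Hne d Hd) as [z Hbz].
    specialize (Hz z Hbz). rewrite (Hq _ _ Hbz) in Hz. lra.
Qed.

End Limsup.

Lemma Rbar_lt_Finite_gap (L : Rbar) (b : R) :
  Rbar_lt L (Finite b) -> exists a, a < b /\ Rbar_lt L (Finite a).
Proof.
  destruct L as [l| |]; simpl; intros H.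
  - exists ((l + b) / 2). simpl. lra.
  - contradiction.
  - exists (b - 1). split; [lra | exact I].
Qed.

(** Stated only below [0] because [Rbar_plus p_infty m_infty] is [Finite 0]. *)
Lemma Rbar_plus_lt_0_split (A C : Rbar) :
  Rbar_lt (Rbar_plus A C) (Finite 0) ->
  exists a c, a + c < 0 /\ Rbar_lt A (Finite a) /\ Rbar_lt C (Finite c).
Proof.
  destruct A as [x| |], C as [y| |]; simpl; intros H; try contradiction; try lra.
  - exists (x - (x + y) / 4), (y - (x + y) / 4). simpl. lra.
  - exists (x + 1), (- x - 2). simpl. split; [lra | split; [lra | exact I]].
  - exists (- y - 2), (y + 1). simpl. split; [lra | split; [exact I | lra]].
  - exists (-1), (-1). simpl. split; [lra | split; exact I].
Qed.

Lemma Rbar_plus_0_r (c : Rbar) : Rbar_plus c (Finite 0) = c.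
Proof. destruct c; simpl; try rewrite Rplus_0_r; reflexivity. Qed.

Section ClarkeDerivatives.
Context {X : BanachSpace} (F : X -> R) (xbar : X).

Lemma clarke_dir0 : clarke F xbar (bs_zero X) = Finite 0.
Proof.
  unfold clarke. apply limsup_const.
  - intros d z _. rewrite bs_scal0r, bs_add_zero. unfold Rdiv. ring.
  - intros d Hd. exists (xbar, d / 2). simpl. rewrite bs_subv, bs_norm0. lra.
Qed.

Lemma clarke2_dir0 : clarke2 F xbar (bs_zero X) = Finite 0.
Proof.
  unfold clarke2. rewrite clarke_dir0. apply limsup_const.
  - intros d t _. rewrite bs_scal0r, bs_add_zero. simpl. unfold Rdiv. ring.
  - intros d Hd. exists (d / 2). lra.
Qed.

Lemma second_pair_dir0 (v : X) :
  second_pair F xbar (bs_zero X) v = (Finite 0, clarke F xbar v).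
Proof. unfold second_pair. rewrite clarke_dir0, clarke2_dir0, Rbar_plus_0_r. reflexivity. Qed.

Lemma clarke_lt_eventually (w : X) (a : R) (y : nat -> X) (s : nat -> R) :
  Rbar_lt (clarke F xbar w) (Finite a) -> bs_cv y xbar -> tends_to_0plus s ->
  eventually (fun k => F (bs_add (y k) (bs_scal (s k) w)) - F (y k) < a * s k).
Proof.
  intros Hc Hy Hs. apply limsup_lt_eventual_upper in Hc as [d [Hd Hz]].
  generalize (eventually_and _ _ (Hy d Hd) (proj2 Hs d Hd)). apply eventually_mono.
  intros k [Hyk Hsk]. pose proof (proj1 Hs k) as Hpos.
  apply Rdiv_lt_mult; [exact Hpos|]. apply (Hz (y k, s k)). simpl. lra.
Qed.

Lemma clarke2_lt_eventually (u : X) (c : R) (t : nat -> R) :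
  clarke F xbar u = Finite 0 -> Rbar_lt (clarke2 F xbar u) (Finite c) -> tends_to_0plus t ->
  eventually (fun k => F (bs_add xbar (bs_scal (t k) u)) - F xbar < c * (/ 2 * t k ^ 2)).
Proof.
  intros Hu Hc Ht. unfold clarke2 in Hc. rewrite Hu in Hc. simpl Rbar_real in Hc.
  apply limsup_lt_eventual_upper in Hc as [d [Hd Hz]].
  generalize (proj2 Ht d Hd). apply eventually_mono. intros k Htk.
  pose proof (proj1 Ht k) as Hpos.
  replace (/ 2 * t k ^ 2) with (t k ^ 2 / 2) by field.
  apply Rdiv_lt_mult; [nra|].
  specialize (Hz (t k) (conj Hpos Htk)). simpl in Hz. rewrite Rmult_0_r, Rminus_0_r in Hz.
  exact Hz.
Qed.

Lemma lipschitz_perturbation (y wk : nat -> X) (w : X) (s : nat -> R) (c : R) :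
  locally_lipschitz_at F xbar -> bs_cv y xbar -> tends_to_0plus s -> bs_cv wk w -> 0 < c ->
  eventually (fun k => F (bs_add (y k) (bs_scal (s k) (wk k)))
                       - F (bs_add (y k) (bs_scal (s k) w)) < c * s k).
Proof.
  intros [K [d [Hd HL]]] Hy Hs Hwk Hc.
  set (K' := Rabs K + 1). assert (HK' : 0 < K') by (pose proof (Rabs_pos K); unfold K'; lra).
  pose proof (bs_cv_add_scal y wk xbar w s Hy Hs Hwk d Hd) as Hnear1.
  pose proof (bs_cv_add_scal y (fun _ => w) xbar w s Hy Hs (bs_cv_const w) d Hd) as Hnear2.
  pose proof (Hwk (c / K') ltac:(apply Rdiv_lt_0_compat; assumption)) as Hclose.
  generalize (eventually_and _ _ Hnear1 (eventually_and _ _ Hnear2 Hclose)).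
  apply eventually_mono. intros k (H1 & H2 & H3).
  pose proof (proj1 Hs k) as Hpos. specialize (HL _ _ H1 H2).
  rewrite bs_subDl, bs_scal_sub, bs_norm_scal_pos in HL by exact Hpos.
  apply Rlt_div_mult in H3; [|exact HK'].
  set (nd := bs_norm (bs_sub (wk k) w)) in *.
  assert (Hnd : 0 <= nd) by apply bs_norm_nonneg.
  assert (HK : K <= K') by (pose proof (Rle_abs K); unfold K'; lra).
  assert (K * (s k * nd) <= K' * (s k * nd)) by (apply Rmult_le_compat_r; nra).
  pose proof (Rle_abs (F (bs_add (y k) (bs_scal (s k) (wk k)))
                       - F (bs_add (y k) (bs_scal (s k) w)))).
  nra.
Qed.

Lemma clarke_neg_descent (w : X) (wk : nat -> X) (s : nat -> R) :
  locally_lipschitz_at F xbar -> Rbar_lt (clarke F xbar w) (Finite 0) ->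
  tends_to_0plus s -> bs_cv wk w ->
  eventually (fun k => F (bs_add xbar (bs_scal (s k) (wk k))) < F xbar).
Proof.
  intros HL Hc Hs Hwk. destruct (Rbar_lt_Finite_gap _ _ Hc) as [r [Hr Hcr]].
  generalize (eventually_and _ _
    (lipschitz_perturbation (fun _ => xbar) wk w s (- r / 2) HL (bs_cv_const xbar) Hs Hwk
       ltac:(lra))
    (clarke_lt_eventually w r (fun _ => xbar) s Hcr (bs_cv_const xbar) Hs)).
  apply eventually_mono. intros k [H1 H2]. pose proof (proj1 Hs k). nra.
Qed.

Definition second_order_path (u : X) (t : R) (w : X) : X :=
  bs_add (bs_add xbar (bs_scal t u)) (bs_scal (/ 2 * t ^ 2) w).

Lemma second_order_path_scal (u w : X) (t : R) :
  second_order_path u t w = bs_add xbar (bs_scal t (bs_add u (bs_scal (/ 2 * t) w))).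
Proof.
  unfold second_order_path. rewrite bs_scal_distr_l, bs_scal_assoc, bs_add_assoc.
  replace (t * (/ 2 * t)) with (/ 2 * t ^ 2) by ring. reflexivity.
Qed.

Lemma second_order_path_cv (u v : X) (t : nat -> R) (vk : nat -> X) :
  tends_to_0plus t -> bs_cv vk v -> bs_cv (fun k => second_order_path u (t k) (vk k)) xbar.
Proof.
  intros Ht Hvk. apply (bs_cv_add_scal _ _ _ v).
  - exact (bs_cv_add_scal _ _ _ u t (bs_cv_const xbar) Ht (bs_cv_const u)).
  - exact (tends_to_0plus_half_sqr t Ht).
  - exact Hvk.
Qed.

(** The point [xbar + t u] has to be compared with [xbar] through [F°°(xbar, u)], and the
    step of size [t^2/2] from it through [F°(xbar, v)], perturbed from [v] to [v_k]. *)
Lemma clarke2_neg_descent (u v : X) (t : nat -> R) (vk : nat -> X) :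
  locally_lipschitz_at F xbar -> clarke F xbar u = Finite 0 ->
  Rbar_lt (Rbar_plus (clarke F xbar v) (clarke2 F xbar u)) (Finite 0) ->
  tends_to_0plus t -> bs_cv vk v ->
  eventually (fun k => F (second_order_path u (t k) (vk k)) < F xbar).
Proof.
  intros HL Hu Hc Ht Hvk.
  destruct (Rbar_plus_lt_0_split _ _ Hc) as [a [c [Hac [Ha Hcc]]]].
  set (y := fun k => bs_add xbar (bs_scal (t k) u)).
  set (s := fun k => / 2 * t k ^ 2).
  assert (Hy : bs_cv y xbar) by exact (bs_cv_add_scal _ _ _ u t (bs_cv_const xbar) Ht
                                                      (bs_cv_const u)).
  assert (Hs : tends_to_0plus s) by exact (tends_to_0plus_half_sqr t Ht).
  generalize (eventually_and _ _
    (lipschitz_perturbation y vk v s (- (a + c) / 2) HL Hy Hs Hvk ltac:(lra))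
    (eventually_and _ _ (clarke_lt_eventually v a y s Ha Hy Hs)
                        (clarke2_lt_eventually u c t Hu Hcc Ht))).
  apply eventually_mono. intros k (H1 & H2 & H3). pose proof (proj1 Hs k).
  unfold second_order_path. fold (y k) (s k) in *. nra.
Qed.

Lemma lex_lt_descent (u v : X) (t : nat -> R) (vk : nat -> X) :
  locally_lipschitz_at F xbar -> lex_lt (second_pair F xbar u v) zero2 ->
  tends_to_0plus t -> bs_cv vk v ->
  eventually (fun k => F (second_order_path u (t k) (vk k)) < F xbar).
Proof.
  intros HL [Hfirst | [Hfirst Hsecond]] Ht Hvk; simpl in Hfirst.
  - assert (Hwk : bs_cv (fun k => bs_add u (bs_scal (/ 2 * t k) (vk k))) u).
    { exact (bs_cv_add_scal _ _ _ v _ (bs_cv_const u)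
               (tends_to_0plus_scal (/ 2) t ltac:(lra) Ht) Hvk). }
    generalize (clarke_neg_descent u _ t HL Hfirst Ht Hwk). apply eventually_mono.
    intros k Hk. rewrite second_order_path_scal. exact Hk.
  - exact (clarke2_neg_descent u v t vk HL Hfirst Hsecond Ht Hvk).
Qed.

End ClarkeDerivatives.

Lemma lex_lt_le (a b : Rbar * Rbar) : lex_lt a b -> lex_le a b.
Proof. intros [H | [H1 H2]]; [left | right]; auto. split; [exact H1 | left; exact H2]. Qed.

Lemma lex_le_fst (a b : Rbar * Rbar) : lex_le a b -> Rbar_le (fst a) (fst b).
Proof. intros [H | [H _]]; [left | right]; exact H. Qed.

Section VectorProblem.
Context {X : BanachSpace} (p m : nat) (f g : nat -> X -> R) (xbar : X).

Lemma local_weak_efficient_no_descent (x : nat -> X) :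
  local_weak_efficient p m f g xbar -> bs_cv x xbar -> (forall k, Q0 m g (x k)) ->
  ~ (forall i, (i < p)%nat -> eventually (fun k => f i (x k) < f i xbar)).
Proof.
  intros [d [Hd Heff]] Hx HQ Hdescent.
  destruct (eventually_and _ _ (Hx d Hd) (eventually_forall_lt p _ Hdescent)) as [N HN].
  destruct (HN N (le_n N)) as [Hnear Hlt]. exact (Heff (x N) Hnear (HQ N) Hlt).
Qed.

Lemma critical_pair_of_lex_descent (u v : X) :
  (1 <= p)%nat ->
  (forall i, (i < p)%nat -> lex_lt (second_pair (f i) xbar u v) zero2) ->
  (forall j, (j < m)%nat -> active g xbar j -> lex_le (second_pair (g j) xbar u v) zero2) ->
  exists u' v', critical_dir p m f g xbar u' /\
    (forall i, (i < p)%nat -> lex_lt (second_pair (f i) xbar u' v') zero2) /\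
    (forall j, (j < m)%nat -> active g xbar j -> lex_le (second_pair (g j) xbar u' v') zero2).
Proof.
  intros Hp HF HG.
  destruct (classic (exists i, (i < p)%nat /\ clarke (f i) xbar u = Finite 0)) as [Hc|Hnc].
  - exists u, v. split; [|split; assumption]. split; [|split; [exact Hc|]].
    + intros i Hi. exact (lex_le_fst _ _ (lex_lt_le _ _ (HF i Hi))).
    + intros j Hj Ha. exact (lex_le_fst _ _ (HG j Hj Ha)).
  - exists (bs_zero X), u. split; [|split].
    + split; [|split].
      * intros i _. right. apply clarke_dir0.
      * exists 0%nat. split; [lia | apply clarke_dir0].
      * intros j _ _. right. apply clarke_dir0.
    + intros i Hi. rewrite second_pair_dir0. right. split; [reflexivity|]. simpl.
      destruct (HF i Hi) as [H | [H _]]; [exact H|].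
      exfalso. apply Hnc. exists i. split; assumption.
    + intros j Hj Ha. rewrite second_pair_dir0. right. split; [reflexivity|].
      exact (lex_le_fst _ _ (HG j Hj Ha)).
Qed.

End VectorProblem.

Theorem theorem4p2 (X : BanachSpace) (p m : nat) (f g : nat -> X -> R) (xbar : X) :
  (1 <= p)%nat ->
  Q0 m g xbar ->
  (forall i, (i < p)%nat -> locally_lipschitz_at (f i) xbar) ->
  (forall j, (j < m)%nat -> active g xbar j -> locally_lipschitz_at (g j) xbar) ->
  (forall j, (j < m)%nat -> ~ active g xbar j -> continuous_at_bs (g j) xbar) ->
  local_weak_efficient p m f g xbar ->
  (forall u : X, critical_dir p m f g xbar u ->
     forall v : X, L2 p m f g xbar u v -> T2 (Q0 m g) xbar u v) ->
  ~ (exists u v : X,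
       (forall i, (i < p)%nat -> lex_lt (second_pair (f i) xbar u v) zero2) /\
       (forall j, (j < m)%nat -> active g xbar j -> lex_le (second_pair (g j) xbar u v) zero2)).
Proof.
  intros Hp _ Hf _ _ Heff HT [u [v [HF HG]]].
  destruct (critical_pair_of_lex_descent p m f g xbar u v Hp HF HG)
    as (u' & v' & Hcrit & HF' & HG').
  destruct (HT u' Hcrit v' (conj (fun i Hi => lex_lt_le _ _ (HF' i Hi)) HG'))
    as (t & vk & Hpos & Hcv & Hvk & HQ).
  pose proof (tends_to_0plus_of_Un_cv t Hpos Hcv) as Ht.
  apply (local_weak_efficient_no_descent p m f g xbar _ Heff
           (second_order_path_cv xbar u' v' t vk Ht Hvk) HQ).
  intros i Hi. exact (lex_lt_descent (f i) xbar u' v' t vk (Hf i Hi) (HF' i Hi) Ht Hvk).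
Qed.
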